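(* Let $X$ be a $k$-variety and $\alpha:\mathbb{G}_a\times X\dashrightarrow X$ a nontrivial rational $\mathbb{G}_a$-action with co-action $\alpha^*:K_X\to K_X(t)$, and let $K_0=K_X^{\mathbb{G}_a}=\{h\in K_X:\alpha^*h=h\}$. Then there exists $s\in K_X$, transcendental over $K_0$, such that $\alpha^*(s)=s+t$ and $K_X=K_0(s)$; consequently $\alpha^*(f(s))=f(s+t)$ for every $f(s)\in K_0(s)=K_X$.
   Context: $k$ is a field of characteristic zero; a $k$-variety is a separated geometrically integral scheme of finite type over $k$, with function field $K_X$; $\mathbb{G}_a=\mathrm{Spec}(k[t])$. A rational $\mathbb{G}_a$-action on $X$ is given by a homomorphism of $k$-fields $\alpha^*:K_X\to K_X(t)$ with image in $\mathcal{O}_{\nu_0}=\{r(t)\in K_X(t):\mathrm{ord}_{t=0}r\ge 0\}$, such that $(\alpha^*\otimes\mathrm{id})\circ\alpha^*$ equals $\alpha^*$ followed by $t\mapsto t+t'$ (as maps $K_X\to K_X(t,t')$, where $\alpha^*\otimes \mathrm{id}$ applies $\alpha^*$ to coefficients of $K_X(t')$ and sends the new variable to $t$), and such that reduction of $\alpha^*$ modulo $t$ is the identity of $K_X$. The action is nontrivial if $\alpha^*\neq$ the inclusion $K_X\subset K_X(t)$. *)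

From HB Require Import structures.
From mathcomp Require Import all_boot all_order all_algebra.
Set Implicit Arguments. Unset Strict Implicit. Unset Printing Implicit Defensive.
Import Order.TTheory GRing.Theory Num.Theory.
Local Open Scope ring_scope.

Inductive in_gen (K : fieldType) (S : K -> Prop) : K -> Prop :=
  | gen_base x : S x -> in_gen S x
  | gen_0 : in_gen S 0
  | gen_1 : in_gen S 1
  | gen_add x y : in_gen S x -> in_gen S y -> in_gen S (x + y)
  | gen_opp x : in_gen S x -> in_gen S (- x)
  | gen_mul x y : in_gen S x -> in_gen S y -> in_gen S (x * y)
  | gen_inv x : in_gen S x -> in_gen S (x ^-1).

Definition algebraic_over (K : fieldType) (P : K -> Prop) (x : K) : Prop :=
  exists p : {poly K}, p != 0 /\ (forall i, P p`_i) /\ root p x.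

(* K (with structure map iota : k -> K) is the function field of a k-variety,
   i.e. a finitely generated field extension of k in which k is algebraically
   closed (= geometrically integral, since char k = 0 gives separability). *)
Definition is_function_field (k K : fieldType) (iota : {rmorphism k -> K}) : Prop :=
  (exists gens : seq K, forall x, in_gen (fun y => (exists c, y = iota c) \/ y \in gens) x)
  /\ (forall x : K, (exists p : {poly k}, p != 0 /\ root (map_poly iota p) x) ->
        exists c, x = iota c).

Notation "x %:F" := (@FracField.tofrac _ x) : ring_scope.

Notation Kt K := {fraction {poly K}}.
Notation Ktt K := {fraction {poly {fraction {poly K}}}}.

Definition tvar (K : fieldType) : Kt K := ('X : {poly K})%:F.
Definition cst (K : fieldType) (c : K) : Kt K := (c%:P)%:F.

(* t and t' inside K(t,t') = K(t)(t') *)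
Definition tvar1 (K : fieldType) : Ktt K := ((tvar K)%:P)%:F.
Definition tvar2 (K : fieldType) : Ktt K := ('X : {poly Kt K})%:F.
Definition cst2 (K : fieldType) (c : K) : Ktt K := ((cst c)%:P)%:F.

(* alpha* : K -> K(t) is a rational G_a-action on K (as a k-field):
   - k-linear field homomorphism (alpha is an rmorphism),
   - image in the valuation ring O_{nu_0}, reduction mod t is the identity:
     every alpha* h is P/Q with Q(0) <> 0 and P(0)/Q(0) = h,
   - cocycle: (alpha* (x) id) o alpha* = (t |-> t + t') o alpha*, expressed on
     any representative alpha* h = P(t)/Q(t):
       (alpha* (x) id)(P(t')/Q(t')) = P^alpha(t') / Q^alpha(t') and
       (t |-> t+t')(P/Q) = P(t+t')/Q(t+t'). *)
Definition rational_Ga_action (k K : fieldType) (iota : {rmorphism k -> K})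
  (alpha : {rmorphism K -> Kt K}) : Prop :=
  (forall c : k, alpha (iota c) = cst (iota c))
  /\ (forall h : K, exists P Q : {poly K},
        Q.[0] != 0 /\ alpha h = P%:F / Q%:F /\ P.[0] / Q.[0] = h)
  /\ (forall (h : K) (P Q : {poly K}), Q != 0 -> alpha h = P%:F / Q%:F ->
        (map_poly alpha P)%:F / (map_poly alpha Q)%:F
        = (map_poly (@cst2 K) P).[tvar1 K + tvar2 K]
          / (map_poly (@cst2 K) Q).[tvar1 K + tvar2 K]).

Definition nontrivial_action (K : fieldType) (alpha : {rmorphism K -> Kt K}) : Prop :=
  exists h : K, alpha h != cst h.

Definition invariants (K : fieldType) (alpha : {rmorphism K -> Kt K}) (h : K) : Prop :=
  alpha h = cst h.

From HB Require Import structures.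
From mathcomp Require Import all_boot all_order all_algebra.
Set Implicit Arguments. Unset Strict Implicit. Unset Printing Implicit Defensive.
Import GRing.Theory.
Local Open Scope ring_scope.

(* Write alpha h = P/Q in lowest terms with Q monic. Uniqueness of such
   representations turns the cocycle identity into the coefficientwise
   identities P^alpha = P(t + t') and Q^alpha = Q(t + t'). For h with
   deg Q = m + 1 > 0, which exists because the action is nontrivial, comparing
   the coefficients of t'^m gives alpha Q_m = Q_m + (m + 1) t, so in
   characteristic 0 the element s = Q_m / (m + 1) satisfies alpha s = s + t.
   Then for any f, with alpha f = P/Q reduced, the polynomials P(X - s) and
   Q(X - s) have invariant coefficients and f = P(0)/Q(0) is their quotient at
   X = s, so K = K_0(s); and p(s) = 0 with p over K_0 would force p(s + t) = 0
   in K(t). *)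

Lemma tofrac_repr (R : idomainType) (x : {fraction R}) :
  exists n d : R, d != 0 /\ x = n%:F / d%:F.
Proof.
elim/quotW: x => r.
exists (\n_r), (\d_r); split; first exact: denom_ratioP.
unlock FracField.tofrac.
rewrite -[_^-1]/(FracField.inv _) -FracField.pi_inv.
rewrite -[_ * _]/(FracField.mul _ _) -FracField.pi_mul.
apply/eqmodP; rewrite /= FracField.equivfE /FracField.mulf /FracField.invf /=.
by rewrite !numden_Ratio ?mul1r ?oner_neq0 ?denom_ratioP // mulr1 mulrC.
Qed.

Lemma tofrac_div_eq (R : idomainType) (a b c d : R) : b != 0 -> d != 0 ->
  (a%:F / b%:F = c%:F / d%:F) <-> a * d = c * b.
Proof.
move=> nz_b nz_d; have eq_div : (a%:F / b%:F == c%:F / d%:F) = (a * d == c * b).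
  by rewrite eqr_div ?tofrac_eq0 // -!tofracM tofrac_eq.
by split=> [/eqP | e]; [rewrite eq_div => /eqP | apply/eqP; rewrite eq_div e].
Qed.

Definition reduced_repr (F : fieldType) (x : {fraction {poly F}}) (A B : {poly F}) :=
  [/\ coprimep A B, B \is monic & x = A%:F / B%:F].

Section ReducedFractions.

Variable F : fieldType.
Implicit Types (x : {fraction {poly F}}) (A B C D : {poly F}).

Lemma reduced_repr_exists x : exists A B, reduced_repr x A B.
Proof.
have [n [d [nz_d ->]]] := tofrac_repr x.
pose g := gcdp n d; pose c := lead_coef (d %/ g).
have nz_g : g != 0 by rewrite gcdp_eq0 negb_and nz_d orbT.
have def_n : n = n %/ g * g by rewrite divpK // dvdp_gcdl.
have def_d : d = d %/ g * g by rewrite divpK // dvdp_gcdr.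
have nz_c : c != 0.
  rewrite lead_coef_eq0; apply: contraNneq nz_d => d_g0.
  by rewrite def_d d_g0 mul0r.
exists (c^-1 *: (n %/ g)), (c^-1 *: (d %/ g)); split.
- rewrite coprimepZl ?coprimepZr ?invr_eq0 //.
  by apply: coprimep_div_gcd; rewrite nz_d orbT.
- by apply/monicP; rewrite lead_coefZ mulVf.
- apply/tofrac_div_eq => //.
    by rewrite scaler_eq0 negb_or invr_eq0 nz_c -lead_coef_eq0.
  by rewrite -scalerAr -scalerAl {1}def_n {2}def_d mulrAC mulrA.
Qed.

Lemma reduced_repr_dvdp x A B C D :
  reduced_repr x A B -> D != 0 -> x = C%:F / D%:F -> B %| D.
Proof.
case=> cop_AB mon_B -> nz_D /(tofrac_div_eq _ _ (monic_neq0 mon_B) nz_D) eAD.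
have cop_BA : coprimep B A by rewrite coprimep_sym.
by rewrite -(Gauss_dvdpl _ cop_BA) mulrC eAD dvdp_mull.
Qed.

Lemma reduced_repr_uniq x A B C D :
  reduced_repr x A B -> reduced_repr x C D -> A = C /\ B = D.
Proof.
move=> rAB rCD; have [_ mon_B eAB] := rAB; have [_ mon_D eCD] := rCD.
have [nz_B nz_D] := (monic_neq0 mon_B, monic_neq0 mon_D).
have eBD : B = D.
  apply/eqP; rewrite -eqp_monic // /eqp.
  by rewrite (reduced_repr_dvdp rAB nz_D eCD) (reduced_repr_dvdp rCD nz_B eAB).
split=> //; apply: (mulIf nz_D).
by apply/(tofrac_div_eq _ _ nz_D nz_D); rewrite -eCD -{1}eBD -eAB.
Qed.

End ReducedFractions.

Section ShiftByConstant.

Variables (R : comNzRingType) (c : R).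

Lemma size_exprXaddC n : size (('X + c%:P) ^+ n) = n.+1.
Proof. by rewrite -[c]opprK polyCN size_exp_XsubC. Qed.

Lemma coef_exprXaddC_lead n : (('X + c%:P) ^+ n)`_n = 1.
Proof.
by have /monicP := monic_exp n (monicXaddC c); rewrite lead_coefE size_exprXaddC.
Qed.

Lemma coef_exprXaddC_sublead n : (('X + c%:P) ^+ n.+1)`_n = n.+1%:R * c.
Proof.
elim: n => [|n IHn]; first by rewrite expr1 coefD coefX coefC add0r mul1r.
rewrite exprSr mulrDr coefD coefMX /= coefMC IHn coef_exprXaddC_lead.
by rewrite -mulrDl natr1.
Qed.

Lemma coef_comp_XaddC_sublead (Q : {poly R}) m :
  Q \is monic -> size Q = m.+2 -> (Q \Po ('X + c%:P))`_m = Q`_m + m.+1%:R * c.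
Proof.
move=> mon_Q size_Q; rewrite comp_polyE coef_sum size_Q !big_ord_recr /=.
rewrite big1 ?add0r => [|i _]; last first.
  by rewrite coefZ [X in _ * X]nth_default ?mulr0 // size_exprXaddC ltn_ord.
have /monicP := mon_Q; rewrite lead_coefE size_Q => /= ->.
by rewrite !coefZ coef_exprXaddC_lead coef_exprXaddC_sublead mulr1 mul1r.
Qed.

End ShiftByConstant.

Lemma horner_map_tofracC (F : fieldType) (p q : {poly F}) :
  (map_poly (fun c : F => (c%:P)%:F) p).[q%:F] = (p \Po q)%:F.
Proof.
rewrite -[fun c : F => _]/(@FracField.tofrac _ \o polyC).
by rewrite map_poly_comp_id0 ?rmorph0 // horner_map.
Qed.

Lemma in_gen_horner (F : fieldType) (S : F -> Prop) (p : {poly F}) (s : F) :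
  (forall i, S p`_i) -> in_gen (fun y => S y \/ y = s) p.[s].
Proof.
move=> S_p; rewrite horner_coef.
apply: (big_ind (in_gen _)); [exact: gen_0 | exact: gen_add | move=> i _].
apply: gen_mul; first by apply: gen_base; left.
elim: (nat_of_ord i) => [|n IHn]; first by rewrite expr0; exact: gen_1.
by rewrite exprS; apply: gen_mul => //; apply: gen_base; right.
Qed.

Definition cst_rmorph (K : fieldType) : {rmorphism K -> Kt K} :=
  (@FracField.tofrac {poly K} \o polyC)%FUN.

Section RationalGaAction.

Variables (k K : fieldType) (iota : {rmorphism k -> K}) (alpha : {rmorphism K -> Kt K}).
Hypothesis hact : rational_Ga_action iota alpha.

(* In Ktt K the variable t' is 'X and t is the constant tvar K, so P(t + t')
   is P^cst \Po ('X + t). *)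
Lemma map_act_reduced h P Q : reduced_repr (alpha h) P Q ->
  map_poly alpha P = map_poly (cst_rmorph K) P \Po ('X + (tvar K)%:P)
  /\ map_poly alpha Q = map_poly (cst_rmorph K) Q \Po ('X + (tvar K)%:P).
Proof.
move=> rPQ; have [cop_PQ mon_Q e_h] := rPQ; have [_ [_ act_cocycle]] := hact.
have eval_shift (R : {poly K}) : (map_poly (@cst2 K) R).[tvar1 K + tvar2 K]
    = (map_poly (cst_rmorph K) R \Po ('X + (tvar K)%:P))%:F.
  have -> : map_poly (@cst2 K) R
      = map_poly (fun c : Kt K => (c%:P)%:F) (map_poly (cst_rmorph K) R).
    by rewrite -map_poly_comp_id0 ?rmorph0 //; apply: eq_map_poly.
  by rewrite /tvar1 /tvar2 -tofracD addrC horner_map_tofracC.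
have e_shift := etrans (act_cocycle h P Q (monic_neq0 mon_Q) e_h)
  (congr2 (fun a b => a / b) (eval_shift P) (eval_shift Q)).
have mon_shift (R : {poly K}) : R \is monic ->
    map_poly (cst_rmorph K) R \Po ('X + (tvar K)%:P) \is monic.
  move=> mon_R; apply/monicP; rewrite lead_coef_comp ?size_XaddC //.
  by rewrite lead_coefXaddC expr1n mulr1 (monicP (monic_map _ mon_R)).
apply: (@reduced_repr_uniq _ ((map_poly alpha P)%:F / (map_poly alpha Q)%:F)).
- by split; rewrite ?coprimep_map ?map_monic.
- split=> //; last exact: mon_shift.
  by apply: coprimep_comp_poly; rewrite coprimep_map.
Qed.

Lemma act_reduced_at0 h P Q :
  reduced_repr (alpha h) P Q -> Q.[0] != 0 /\ h = P.[0] / Q.[0].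
Proof.
move=> rPQ; have [_ mon_Q e_h] := rPQ; have [_ [act_at0 _]] := hact.
have [P1 [Q1 [nz_Q10 [e_h1 def_h]]]] := act_at0 h.
have nz_Q1 : Q1 != 0 by apply: contraNneq nz_Q10 => ->; rewrite horner0.
have nz_Q0 : Q.[0] != 0.
  have /dvdpP [r def_Q1] := reduced_repr_dvdp rPQ nz_Q1 e_h1.
  by move: nz_Q10; rewrite def_Q1 hornerM mulf_eq0 negb_or => /andP[].
have /(tofrac_div_eq _ _ (monic_neq0 mon_Q) nz_Q1) cross := etrans (esym e_h) e_h1.
by split=> //; apply/eqP; rewrite -def_h eqr_div // -!hornerM cross.
Qed.

Lemma reduced_nonconstant_denominator : nontrivial_action alpha ->
  exists h P Q, reduced_repr (alpha h) P Q /\ (1 < size Q)%N.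
Proof.
case=> h nt_h; have [P [Q rPQ]] := reduced_repr_exists (alpha h).
have [lt1Q | leQ1] := ltnP 1 (size Q); first by exists h, P, Q.
have [_ mon_Q e_h] := rPQ.
have Q1 : Q = 1.
  by move: mon_Q; rewrite [Q]size1_polyC // monicE lead_coefC => /eqP ->.
have [leP1 | lt1P] := leqP (size P) 1.
  have [_ def_h] := act_reduced_at0 rPQ.
  move: nt_h; rewrite e_h def_h Q1 [P]size1_polyC // hornerC hornerC.
  by rewrite divr1 divr1 eqxx.
have nz_P : P != 0 by rewrite -size_poly_eq0 -lt0n (ltn_trans _ lt1P).
have nz_l : lead_coef P != 0 by rewrite lead_coef_eq0.
exists h^-1, (lead_coef P)^-1%:P, ((lead_coef P)^-1 *: P).
split; last by rewrite size_scale ?invr_eq0.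
split.
- rewrite -[_%:P]mulr1 mul_polyC coprimepZl ?coprimepZr ?invr_eq0 //; exact: coprime1p.
- by apply/monicP; rewrite lead_coefZ mulVf.
- rewrite fmorphV e_h Q1 tofrac1 divr1 -div1r -tofrac1.
  apply/tofrac_div_eq => //; first by rewrite scaler_eq0 negb_or invr_eq0 nz_l.
  by rewrite mul1r mul_polyC.
Qed.

Lemma exists_slice : [pchar K] =i pred0 -> nontrivial_action alpha ->
  exists s, alpha s = cst s + tvar K.
Proof.
move=> charK0 /reduced_nonconstant_denominator [h [P [Q [rPQ lt1Q]]]].
have [_ mon_Q _] := rPQ.
have [m size_Q] : exists m, size Q = m.+2.
  by exists (size Q).-2; case: (size Q) lt1Q => [|[]].
have nz_m1 : (m.+1%:R : Kt K) != 0.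
  by rewrite -(rmorph_nat (cst_rmorph K)) fmorph_eq0 ((pcharf0P _).1 charK0).
have act_Qm : alpha Q`_m = cst Q`_m + m.+1%:R * tvar K.
  have [_ act_Q] := map_act_reduced rPQ.
  rewrite -coef_map act_Q coef_comp_XaddC_sublead ?map_monic ?size_map_poly //.
  by rewrite coef_map.
exists (Q`_m / m.+1%:R).
rewrite -[cst _]/(cst_rmorph K _) !fmorph_div !rmorph_nat act_Qm.
by rewrite mulrDl [_ * tvar K]mulrC mulfK.
Qed.

Lemma map_act_invariant (p : {poly K}) :
  (forall i, invariants alpha p`_i) -> map_poly alpha p = map_poly (@cst K) p.
Proof.
move=> inv_p; have -> : map_poly (@cst K) p = map_poly (cst_rmorph K) p.
  exact: eq_map_poly.
apply/polyP => i; rewrite coef_map [RHS]coef_map.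
exact: inv_p.
Qed.

Section Slice.

Variable s : K.
Hypothesis act_s : alpha s = cst s + tvar K.

Lemma act_horner_invariant (p : {poly K}) : (forall i, invariants alpha p`_i) ->
  alpha p.[s] = (map_poly (@cst K) p).[cst s + tvar K].
Proof. by move=> inv_p; rewrite -horner_map act_s map_act_invariant. Qed.

Lemma slice_transcendental : ~ algebraic_over (invariants alpha) s.
Proof.
case=> p [nz_p [inv_p /rootP p_s0]].
have := act_horner_invariant inv_p; rewrite p_s0 rmorph0.
have -> : cst s + tvar K = ('X + s%:P)%:F by rewrite /tvar /cst -tofracD addrC.
rewrite horner_map_tofracC => /esym/eqP; rewrite tofrac_eq0.
by rewrite -size_poly_eq0 size_comp_poly2 ?size_XaddC // size_poly_eq0 (negPf nz_p).
Qed.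

Lemma invariant_coef_comp_XsubC (R : {poly K}) :
  map_poly alpha R = map_poly (cst_rmorph K) R \Po ('X + (tvar K)%:P) ->
  forall i, invariants alpha (R \Po ('X - s%:P))`_i.
Proof.
move=> act_R i; rewrite /invariants -(coef_map alpha) map_comp_poly act_R.
rewrite map_polyXsubC act_s -comp_polyA.
have -> : ('X + (tvar K)%:P) \Po ('X - (cst s + tvar K)%:P) = 'X - (cst_rmorph K s)%:P.
  by rewrite comp_polyD comp_polyX comp_polyC polyCD opprD addrA subrK.
rewrite -map_polyXsubC -map_comp_poly coef_map.
reflexivity.
Qed.

Lemma slice_generates x : in_gen (fun y => invariants alpha y \/ y = s) x.
Proof.
have [P [Q rPQ]] := reduced_repr_exists (alpha x).
have [act_P act_Q] := map_act_reduced rPQ.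
have [_ ->] := act_reduced_at0 rPQ.
have at_s (R : {poly K}) : R.[0] = (R \Po ('X - s%:P)).[s].
  by rewrite horner_comp hornerXsubC subrr.
rewrite !at_s; apply: gen_mul; [|apply: gen_inv]; apply: in_gen_horner.
- exact: invariant_coef_comp_XsubC act_P.
- exact: invariant_coef_comp_XsubC act_Q.
Qed.

End Slice.

End RationalGaAction.

Theorem mainTheorem2 (k K : fieldType) (iota : {rmorphism k -> K})
  (char0 : [pchar k] =i pred0)
  (hK : is_function_field iota)
  (alpha : {rmorphism K -> {fraction {poly K}}})
  (hact : rational_Ga_action iota alpha)
  (hnt : nontrivial_action alpha) :
  exists s : K,
    ~ algebraic_over (invariants alpha) s
    /\ alpha s = cst s + tvar K
    /\ (forall x : K, in_gen (fun y => invariants alpha y \/ y = s) x)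
    /\ (forall p q : {poly K},
          (forall i, invariants alpha p`_i) -> (forall i, invariants alpha q`_i) ->
          q.[s] != 0 ->
          alpha (p.[s] / q.[s])
          = (map_poly (@cst K) p).[cst s + tvar K] / (map_poly (@cst K) q).[cst s + tvar K]).
Proof.
have charK0 : [pchar K] =i pred0 by move=> p; rewrite (fmorph_pchar iota) char0.
have [s act_s] := exists_slice hact charK0 hnt.
exists s; split; first exact: slice_transcendental.
split; first exact: act_s.
split; first exact: (slice_generates hact act_s).
move=> p q inv_p inv_q _.
rewrite fmorph_div (act_horner_invariant act_s inv_p) (act_horner_invariant act_s inv_q).
reflexivity.
Qed.
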